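(* Let $W_\Gamma$ be a graph product on a finite graph $\Gamma=(V,E)$ with every vertex group primary or infinite cyclic. Let $M,N$ be two $\sim_\tau$-equivalence classes such that $W_{\Gamma_N}$ is not a free group of rank $k\ge 2$. If $N\cap L_M\ne\emptyset$, then $N\subset L_M$.
   Context: Graph: $\Gamma=(V,E)$, $V$ non-empty finite, $E$ a set of 2-element subsets; $lk(v)=\{x:\{v,x\}\in E\}$, $st(v)=lk(v)\cup\{v\}$; $W_{\Gamma_N}$ is the subgroup generated by the vertex groups $G_v$, $v\in N$. A group is primary if cyclic of order $p^k$, $p$ prime, $k\ge1$. Relation $\le_\tau$ on $V$: $v\le_\tau v$; for $v\neq w$, $v\le_\tau w$ iff either (a) $|G_v|=\infty$ and $lk(v)\subset st(w)$, or (b) $|G_v|=p^k$, $|G_w|=p^\ell$ for the same prime $p$ and $st(v)\subset st(w)$; $v\sim_\tau w$ iff $v\le_\tau w$ and $w\le_\tau v$. For $M\subset V$, $L_M=V\setminus\bigcup_{w\in M}st(w)$. *)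

From mathcomp Require Import all_boot.
Set Implicit Arguments. Unset Strict Implicit. Unset Printing Implicit Defensive.

Record group := Group {
  gcar :> Type;
  gmul : gcar -> gcar -> gcar;
  ginv : gcar -> gcar;
  gone : gcar;
  gmulA : forall x y z, gmul x (gmul y z) = gmul (gmul x y) z;
  gmul1g : forall x, gmul gone x = x;
  gmulVg : forall x, gmul (ginv x) x = gone
}.
Arguments gmul {g}. Arguments ginv {g}. Arguments gone {g}.

Fixpoint gpow (G : group) (x : G) (n : nat) : G :=
  match n with 0 => gone | n'.+1 => gmul x (gpow x n') end.

Definition is_hom (G H : group) (f : G -> H) : Prop :=
  forall x y, f (gmul x y) = gmul (f x) (f y).

(* words over an alphabet I: letter (i, false) = x_i, (i, true) = x_i^-1 *)
Definition evalw (I : Type) (G : group) (f : I -> G) (w : seq (I * bool)) : G :=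
  foldr (fun a acc => gmul (if a.2 then ginv (f a.1) else f a.1) acc) gone w.

(* freely reduced word: no two consecutive mutually inverse letters *)
Definition reduced_word (I : eqType) (w : seq (I * bool)) : bool :=
  sorted (fun a b => ~~ ((a.1 == b.1) && (a.2 != b.2))) w.

(* Every vertex group is cyclic (primary or infinite cyclic), hence determined
   by its order  o v : nat , with the convention  o v = 0  <-> infinite cyclic. *)
Definition primary_order (n : nat) : Prop :=
  exists p k, prime p /\ 0 < k /\ n = p ^ k.

Definition lk (V : finType) (e : rel V) (v : V) : {set V} := [set x | e v x].
Definition st (V : finType) (e : rel V) (v : V) : {set V} := v |: lk e v.

(* Graph product W_Gamma of the cyclic groups <x_v | x_v^(o v)> (no relation when
   o v = 0), given by its universal property: generators g v satisfy the relations
   of the presentation, and every family in another group satisfying them extends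
   uniquely to a homomorphism. *)
Definition gp_relations (V : finType) (e : rel V) (o : V -> nat)
    (H : group) (h : V -> H) : Prop :=
  (forall v, 0 < o v -> gpow (h v) (o v) = gone) /\
  (forall v w, e v w -> gmul (h v) (h w) = gmul (h w) (h v)).

Definition is_graph_product (V : finType) (e : rel V) (o : V -> nat)
    (W : group) (g : V -> W) : Prop :=
  gp_relations e o g /\
  forall (H : group) (h : V -> H), gp_relations e o h ->
    exists f : W -> H, [/\ is_hom f, (forall v, f (g v) = h v) &
      forall f' : W -> H, is_hom f' -> (forall v, f' (g v) = h v) ->
        forall x, f' x = f x].

(* W_{Gamma_N}: the subgroup of W generated by the g v, v in N *)
Definition in_gen_subgroup (V : finType) (W : group) (g : V -> W) (N : {set V})
    (x : W) : Prop :=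
  exists w : seq (V * bool), all (fun a => a.1 \in N) w /\ evalw g w = x.

Definition free_of_rank (W : group) (S : W -> Prop) (k : nat) : Prop :=
  exists b : 'I_k -> W,
    [/\ forall i, S (b i),
        forall x, S x -> exists w, evalw b w = x &
        forall w : seq ('I_k * bool), reduced_word w -> w != [::] ->
          evalw b w <> gone].

Definition tau_le (V : finType) (e : rel V) (o : V -> nat) (v w : V) : Prop :=
  v = w \/
  (v <> w /\
   ((o v = 0 /\ lk e v \subset st e w) \/
    ((exists p k l, [/\ prime p, 0 < k, 0 < l, o v = p ^ k & o w = p ^ l]) /\
     st e v \subset st e w))).

Definition tau_equiv (V : finType) (e : rel V) (o : V -> nat) (v w : V) : Prop :=
  tau_le e o v w /\ tau_le e o w v.

Definition is_tau_class (V : finType) (e : rel V) (o : V -> nat) (M : {set V}) : Prop :=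
  exists v, forall w, w \in M <-> tau_equiv e o v w.

Definition LM (V : finType) (e : rel V) (M : {set V}) : {set V} :=
  ~: \bigcup_(w in M) st e w.

From mathcomp Require Import all_boot.
Set Implicit Arguments. Unset Strict Implicit.

(* The implication is purely combinatorial: it only uses that e is symmetric
   and the definition of <=_tau. Whichever clause of <=_tau holds, v <=_tau w implies lk(v) ⊂ st(w), and
      the relation "lk(u) ⊂ st(v)" is transitive on a symmetric graph; with the
      uniqueness of the prime of a prime power this makes <=_tau transitive, so
      ~_tau is an equivalence and a ~_tau-class is determined by any member.
   2. Key lemma: if v ∈ L_M, w ∉ M and w <=_tau v, then w ∈ L_M.  Indeed, if
      w ∈ st(m) with m ∈ M, then m ∈ lk(w) ⊂ st(v), forcing v = m ∈ M or
      v ∈ lk(m), both excluded by v ∈ L_M.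
   3. Given v ∈ N ∩ L_M and w ∈ N, we have w ~_tau v and w ∉ M (otherwise
      the class M would contain v ∉ M), so step 2 gives w ∈ L_M. *)

Section TauOrder.

Variables (V : finType) (e : rel V) (o : V -> nat).
Hypothesis e_sym : symmetric e.

Lemma mem_st (v x : V) : (x \in st e v) = (x == v) || e v x.
Proof. by rewrite /st /lk !inE. Qed.

Lemma lk_sub_st (v : V) : lk e v \subset st e v.
Proof. by apply/subsetP=> x; rewrite mem_st /lk inE => ->; rewrite orbT. Qed.

Lemma tau_le_lk (v w : V) : tau_le e o v w -> lk e v \subset st e w.
Proof.
case=> [<-|[_ [[_ lk_vw]|[_ st_vw]]]] //; first exact: lk_sub_st.
exact: subset_trans (lk_sub_st v) st_vw.
Qed.

Lemma lk_st_trans (u v w : V) :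
  lk e u \subset st e v -> lk e v \subset st e w -> lk e u \subset st e w.
Proof.
move=> /subsetP uv /subsetP vw; apply/subsetP=> x ux.
have e_ux : e u x by rewrite /lk inE in ux.
have := uv x ux; rewrite mem_st => /orP[/eqP x_v | e_vx]; last first.
  by apply: vw; rewrite /lk inE.
subst x; have := vw u; rewrite /lk inE e_sym mem_st => /(_ e_ux).
case/orP=> [/eqP u_w | e_wu]; first by rewrite -u_w mem_st e_ux orbT.
have := uv w; rewrite /lk inE e_sym mem_st => /(_ e_wu).
by case/orP=> [/eqP-> | e_vw]; rewrite mem_st ?eqxx // e_sym e_vw orbT.
Qed.

Lemma prime_pow_prime (p q k l : nat) :
  prime p -> prime q -> 0 < k -> p ^ k = q ^ l -> p = q.
Proof.
move=> p_pr q_pr k_gt0 pk_ql.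
have : p %| q ^ l by rewrite -pk_ql dvdn_exp.
by rewrite Euclid_dvdX // dvdn_prime2 // => /andP[/eqP].
Qed.

(* <=_tau is a preorder; the prime-power clause composes only with itself,
   since a vertex of finite order cannot have infinite order. *)
Lemma tau_le_trans (u v w : V) :
  tau_le e o u v -> tau_le e o v w -> tau_le e o u w.
Proof.
move=> le_uv le_vw; have [-> | u_neq_w] := eqVneq u w; first by left.
case: le_uv => [u_v | [u_neq_v le_uv]]; first by rewrite u_v.
case: le_vw => [v_w | [v_neq_w le_vw]]; first by rewrite -v_w; right.
have lk_vw : lk e v \subset st e w by apply: tau_le_lk; right.
right; split; first exact/eqP.
case: le_uv => [[ou0 lk_uv] | [[p [k [l [p_pr k_gt0 l_gt0 ou ov]]]] st_uv]].
  by left; split=> //; apply: lk_st_trans lk_uv lk_vw.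
case: le_vw => [[ov0 _] | [[p' [k' [l' [p'_pr k'_gt0 l'_gt0 ov' ow]]]] st_vw]].
  by move: ov; rewrite ov0 => /esym/eqP; rewrite expn_eq0 eqn0Ngt prime_gt0.
have p_p' : p = p' by apply: (prime_pow_prime p_pr p'_pr l_gt0); rewrite -ov ov'.
subst p'; right; split; first by exists p, k, l'.
exact: subset_trans st_uv st_vw.
Qed.

Lemma tau_equiv_sym (v w : V) : tau_equiv e o v w -> tau_equiv e o w v.
Proof. by case. Qed.

Lemma tau_equiv_trans (u v w : V) :
  tau_equiv e o u v -> tau_equiv e o v w -> tau_equiv e o u w.
Proof. by case=> uv vu [vw wv]; split; apply: tau_le_trans; eassumption. Qed.

Lemma tau_class_mem {M : {set V}} {x y : V} :
  is_tau_class e o M -> x \in M -> (y \in M <-> tau_equiv e o x y).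
Proof.
case=> a classM /classM ax; split=> [/classM ay | xy].
  exact: tau_equiv_trans (tau_equiv_sym ax) ay.
exact/classM/(tau_equiv_trans ax xy).
Qed.

Lemma LMP (M : {set V}) (v : V) :
  reflect (forall m, m \in M -> v \notin st e m) (v \in LM e M).
Proof.
rewrite /LM inE; apply: (iffP idP) => [/bigcupP vL m mM | vL].
  by apply/negP=> vm; apply: vL; exists m.
by apply/bigcupP=> -[m /vL /negP].
Qed.

Lemma LM_notin (M : {set V}) (v : V) : v \in LM e M -> v \notin M.
Proof. by move/LMP=> vL; apply/negP=> /vL; rewrite mem_st eqxx. Qed.

Lemma LM_tau_le_closed (M : {set V}) (v w : V) :
  v \in LM e M -> w \notin M -> tau_le e o w v -> w \in LM e M.
Proof.
move=> vL wM /tau_le_lk /subsetP lk_wv; apply/LMP=> m mM.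
rewrite mem_st; apply/negP=> /orP[/eqP w_m | e_mw].
  by move: wM; rewrite w_m mM.
have := lk_wv m; rewrite /lk inE e_sym mem_st => /(_ e_mw) /orP[/eqP m_v | e_vm].
  by move: (LM_notin vL); rewrite -m_v mM.
by move/LMP: vL => /(_ m mM); rewrite mem_st e_sym e_vm orbT.
Qed.

End TauOrder.

Theorem lemma6p9 (V : finType) (e : rel V) (He_sym : symmetric e)
    (He_irr : irreflexive e) (o : V -> nat)
    (Ho : forall v, o v = 0 \/ primary_order (o v))
    (W : group) (g : V -> W) (HW : is_graph_product e o g)
    (M N : {set V}) (HM : is_tau_class e o M) (HN : is_tau_class e o N)
    (Hfree : ~ (exists k, 2 <= k /\ free_of_rank (in_gen_subgroup g N) k)) :
  N :&: LM e M != set0 -> N \subset LM e M.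
Proof.
case/set0Pn=> v /setIP[vN vL]; apply/subsetP=> w wN.
have wv : tau_equiv e o w v by apply/(tau_class_mem He_sym HN wN).
have wM : w \notin M.
  apply/negP=> wM; have /negP := LM_notin vL; apply.
  exact/(tau_class_mem He_sym HM wM).
exact: (LM_tau_le_closed He_sym vL wM wv.1).
Qed.
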